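(* Let $\Sigma$ be a complete fan in $N_{\mathbb R}$ and $\mathbb L=(L,\Sigma_L,\mu,\pi,\varphi)$ a tropical Lagrangian multi-section over $\Sigma$. Then there exists a separable tropical Lagrangian multi-section $\mathbb L_{sep}$ over $\Sigma$ such that $\mathbb L_{sep}\le\mathbb L$. In particular, every tropical Lagrangian multi-section is combinatorially equivalent to a separable one.
   Context: $N$ is a lattice of rank $n$, $M=\mathrm{Hom}(N,\mathbb Z)$, $N_{\mathbb R}=N\otimes\mathbb R$, $\Sigma(k)$ the $k$-dimensional cones of $\Sigma$. A cone complex is a topological space $X$ with a finite collection $\Sigma_X$ of closed subsets (cones) and for each cone $\sigma$ a finitely generated group $M(\sigma)$ of continuous real functions on $\sigma$ such that evaluation identifies $\sigma$ homeomorphically with a convex rational polyhedral cone in $(M(\sigma)\otimes\mathbb R)^\vee$, preimages of faces are cones with $M$ given by restriction, and $X$ is the disjoint union of the relative interiors of its cones. A morphism sends cones into cones and pulls back $M(\sigma)$ into $M(\sigma')$. A weight $\mu:X\to\mathbb Z_{>0}$ is constant on relative interiors; $\mathrm{Tr}_f(\mu)(x)=\sum_{x'\in f^{-1}(x)}\mu(x')$. A branched covering map $\pi:(L,\Sigma_L,\mu)\to(B,\Sigma_B)$ is a surjective morphism mapping each cone homeomorphically onto a cone and with $\mathrm{Tr}_{\pi|_V}(\mu)$ constant for every connected open $U\subset B$ and connected component $V$ of $\pi^{-1}(U)$. A tropical Lagrangian multi-section of rank $r$ over $\Sigma$ is $\mathbb L=(L,\Sigma_L,\mu,\pi,\varphi)$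 with $\pi:(L,\Sigma_L,\mu)\to(N_{\mathbb R},\Sigma)$ a branched covering with $\mathrm{Tr}_\pi(\mu)=r$ and $\varphi:L\to\mathbb R$ continuous with $\varphi|_{\sigma'}\in M(\sigma')$ for all cones $\sigma'$. It is connected if $L$ is. For tropical Lagrangian multi-sections $\mathbb L_1,\mathbb L_2$ of the same rank, $\mathbb L_1\le\mathbb L_2$ means there is a surjective morphism of cone complexes $f:L_2\to L_1$ with $\pi_1\circ f=\pi_2$, $\mathrm{Tr}_f(\mu_2)=\mu_1$ and $f^*\varphi_1=\varphi_2$. For connected $\mathbb L_1,\mathbb L_2$, write $\mathbb L_2\sim_c\mathbb L_1$ if they have the same rank and there is $\mathbb L$ with $\mathbb L\le\mathbb L_1$ and $\mathbb L\le\mathbb L_2$; combinatorial equivalence is the equivalence relation generated by $\sim_c$. $\mathbb L$ is $k$-separable if it is connected and for every $\tau\in\Sigma(k)$ and distinct cones $\tau^{(\alpha)},\tau^{(\beta)}$ of $L$ mapping onto $\tau$ one has $\varphi|_{\tau^{(\alpha)}}\ne\varphi|_{\tau^{(\beta)}}$ (as functions pulled back to $\tau$); separable means $1$-separable. *)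

From HB Require Import structures.
From mathcomp Require Import all_boot all_order all_algebra.
From mathcomp Require Import all_classical all_reals all_analysis.
From mathcomp Require Import Rstruct Rstruct_topology.
From Stdlib Require Import Relation_Operators.
Set Implicit Arguments. Unset Strict Implicit. Unset Printing Implicit Defensive.
Import Order.TTheory GRing.Theory Num.Theory.
Local Open Scope classical_set_scope.
Local Open Scope ring_scope.

Notation R := Rdefinitions.R.

Definition lin (k : nat) (a v : 'rV[R]_k) : R := \sum_(j < k) a 0 j * v 0 j.

Definition poscone (k : nat) (s : seq 'rV[rat]_k) : set 'rV[R]_k :=
  [set v | exists lam : 'I_(size s) -> R,
     (forall j, 0 <= lam j) /\ v = \sum_(j < size s) lam j *: map_mx ratr s`_j].

Definition is_face (k : nat) (C F : set 'rV[R]_k) : Prop :=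
  exists u : 'rV[R]_k, (forall x, C x -> 0 <= lin u x) /\
    F = C `&` [set x | lin u x = 0].

(* g restricted to A is a homeomorphism onto its image *)
Definition embedding_on (X Y : topologicalType) (A : set X) (g : X -> Y) : Prop :=
  {within A, continuous g} /\
  (forall x y, A x -> A y -> g x = g y -> x = y) /\
  (forall x, A x -> forall U, nbhs x U ->
     \forall y \near g x, forall z, A z -> g z = y -> U z).

(* Fans in N_R = R^n  (N = Z^n, M = Hom(N,Z))                          *)

Record fan (n : nat) := Fan {
  fan_idx : finType;
  fan_gens : fan_idx -> seq 'rV[rat]_n }.

Definition fan_cone n (S : fan n) (i : fan_idx S) : set 'rV[R]_n :=
  poscone (fan_gens i).

Definition fan_dim n (S : fan n) (i : fan_idx S) : nat :=
  \rank (\matrix_(j < size (fan_gens i), l < n) ((fan_gens i)`_j) 0 l).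

Definition is_fan n (S : fan n) : Prop :=
  [/\ (forall i j : fan_idx S, fan_cone i = fan_cone j -> i = j),
      (forall (i : fan_idx S) v, fan_cone i v -> fan_cone i (- v) -> v = 0),
      (forall (i : fan_idx S) F, is_face (fan_cone i) F -> exists j : fan_idx S, fan_cone j = F) &
      (forall i j : fan_idx S, is_face (fan_cone i) (fan_cone i `&` fan_cone j) /\
                   is_face (fan_cone j) (fan_cone i `&` fan_cone j))].

Definition complete_fan n (S : fan n) : Prop :=
  forall v : 'rV[R]_n, exists i : fan_idx S, fan_cone i v.

(* Data of a cone complex structure on a topological space X: a finite
   family of subsets (the cones) and, for each cone sigma, a finite list of
   real functions generating the group M(sigma) (only their values on sigma
   matter). *)
Record cone_complex (X : topologicalType) := ConeComplex {
  cc_idx : finType;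
  cc_cone : cc_idx -> set X;
  cc_dim : cc_idx -> nat;
  cc_gen : forall i : cc_idx, 'I_(cc_dim i) -> X -> R }.

Section ConeComplexDefs.
Variables (X : topologicalType) (C : cone_complex X).

(* evaluation map sigma -> Hom(Z^k, R) = R^k  *)
Definition cc_ev (i : cc_idx C) (x : X) : 'rV[R]_(cc_dim i) :=
  \row_j cc_gen j x.

Definition inM (i : cc_idx C) (f : X -> R) : Prop :=
  exists z : 'I_(cc_dim i) -> int,
    forall x, cc_cone i x -> f x = \sum_(k < cc_dim i) (z k)%:~R * cc_gen k x.

Definition inM_restr (i j : cc_idx C) (f : X -> R) : Prop :=
  exists z : 'I_(cc_dim i) -> int,
    forall x, cc_cone j x -> f x = \sum_(k < cc_dim i) (z k)%:~R * cc_gen k x.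

Definition supp_fun (i : cc_idx C) (a : 'rV[R]_(cc_dim i)) : Prop :=
  forall y, cc_cone i y -> 0 <= lin a (cc_ev i y).

(* relative interior of sigma_i: points lying on no proper face *)
Definition relint (i : cc_idx C) (x : X) : Prop :=
  cc_cone i x /\
  forall a, supp_fun a -> lin a (cc_ev i x) = 0 ->
    forall y, cc_cone i y -> lin a (cc_ev i y) = 0.

Definition is_cone_complex : Prop :=
  [/\ (forall i : cc_idx C, closed (cc_cone i)),
      (forall (i : cc_idx C) (k : 'I_(cc_dim i)), {within cc_cone i, continuous (cc_gen k)}),
      (* evaluation identifies sigma homeomorphically with a convex rational
         polyhedral cone in (M(sigma) (x) R)^vee  (viewed inside R^k) *)
      (forall i : cc_idx C, embedding_on (cc_cone i) (cc_ev i) /\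
          exists s : seq 'rV[rat]_(cc_dim i), cc_ev i @` cc_cone i = poscone s),
      (* preimages of faces are cones, with M given by restriction *)
      (forall i (a : 'rV[R]_(cc_dim i)), supp_fun a ->
          exists j : cc_idx C, cc_cone j = cc_cone i `&` [set x | lin a (cc_ev i x) = 0] /\
                    forall f, inM j f <-> inM_restr i j f) &
      (* X is the disjoint union of the relative interiors of the cones *)
      (forall x, exists! i : cc_idx C, relint i x)].

Definition is_weight (mu : X -> nat) : Prop :=
  (forall x, (0 < mu x)%N) /\
  (forall (i : cc_idx C) x y, relint i x -> relint i y -> mu x = mu y).

End ConeComplexDefs.

Definition cc_morphism (X Y : topologicalType) (CX : cone_complex X)
    (CY : cone_complex Y) (f : X -> Y) : Prop :=
  continuous f /\
  forall i : cc_idx CX, exists j : cc_idx CY,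
    (forall x, cc_cone i x -> cc_cone j (f x)) /\
    (forall g, inM j g -> inM i (g \o f)).

(* Tr_{f|_A}(mu)(y) = t : the fibre of f|_A over y is finite and the sum of
   the weights over it is t *)
Definition trace_is (X Y : topologicalType) (A : set X) (f : X -> Y)
    (mu : X -> nat) (y : Y) (t : nat) : Prop :=
  exists s : seq X, uniq s /\ (forall x, (A x /\ f x = y) <-> x \in s) /\
                    sumn (map mu s) = t.

Definition branched_covering (X Y : topologicalType) (CX : cone_complex X)
    (CY : cone_complex Y) (mu : X -> nat) (p : X -> Y) : Prop :=
  [/\ is_weight CX mu,
      cc_morphism CX CY p,
      (forall y, exists x, p x = y),
      (forall i : cc_idx CX, exists j : cc_idx CY,
          p @` cc_cone i = cc_cone j /\ embedding_on (cc_cone i) p) &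
      (forall U : set Y, open U -> connected U ->
        forall V : set X, (exists x, U (p x) /\
                              V = connected_component (p @^-1` U) x) ->
          exists c, forall y, U y -> trace_is V p mu y c)].

(* M(sigma) = restrictions of M = Hom(N,Z), generated by coordinates    *)

Definition fan_cc n (S : fan n) : cone_complex 'rV[R]_n :=
  @ConeComplex _ (fan_idx S) (@fan_cone n S) (fun _ => n)
               (fun _ (j : 'I_n) (x : 'rV[R]_n) => x 0 j).

Record tlms_data (n : nat) := TLMS {
  tl_space : topologicalType;
  tl_cc : cone_complex tl_space;
  tl_mu : tl_space -> nat;
  tl_pi : tl_space -> 'rV[R]_n;
  tl_phi : tl_space -> R }.
Arguments tl_space {n} _.
Arguments tl_cc {n} _.
Arguments tl_mu {n} _ _.
Arguments tl_pi {n} _ _.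
Arguments tl_phi {n} _ _.

Definition is_tlms n (S : fan n) (r : nat) (L : tlms_data n) : Prop :=
  [/\ is_cone_complex (tl_cc L),
      branched_covering (tl_cc L) (fan_cc S) (tl_mu L) (tl_pi L),
      (forall y, trace_is setT (tl_pi L) (tl_mu L) y r),
      continuous (tl_phi L) &
      (forall i : cc_idx (tl_cc L), inM i (tl_phi L))].

Definition tl_connected n (L : tlms_data n) : Prop :=
  connected [set: tl_space L].

Definition tlms_le n (L1 L2 : tlms_data n) : Prop :=
  exists f : tl_space L2 -> tl_space L1,
  [/\ cc_morphism (tl_cc L2) (tl_cc L1) f,
      (forall y, exists x, f x = y),
      (forall x, tl_pi L1 (f x) = tl_pi L2 x),
      (forall y, trace_is setT f (tl_mu L2) y (tl_mu L1 y)) &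
      (forall x, tl_phi L1 (f x) = tl_phi L2 x)].

Definition k_separable n (S : fan n) (k : nat) (L : tlms_data n) : Prop :=
  tl_connected L /\
  forall tau : fan_idx S, fan_dim tau = k ->
  forall a b : cc_idx (tl_cc L), a <> b ->
    tl_pi L @` cc_cone a = fan_cone tau -> tl_pi L @` cc_cone b = fan_cone tau ->
    ~ (forall xa xb, cc_cone a xa -> cc_cone b xb ->
         tl_pi L xa = tl_pi L xb -> tl_phi L xa = tl_phi L xb).

Definition separable n (S : fan n) (L : tlms_data n) : Prop :=
  k_separable S 1 L.

Definition sim_c n (S : fan n) (L1 L2 : tlms_data n) : Prop :=
  tl_connected L1 /\ tl_connected L2 /\
  (exists r, is_tlms S r L1 /\ is_tlms S r L2) /\
  exists L, (exists r, is_tlms S r L) /\ tlms_le L L1 /\ tlms_le L L2.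

Definition comb_equiv n (S : fan n) : tlms_data n -> tlms_data n -> Prop :=
  clos_refl_sym_trans (tlms_data n) (@sim_c n S).

From HB Require Import structures.
From mathcomp Require Import all_boot all_order all_algebra.
From mathcomp Require Import all_classical all_reals all_analysis.
From mathcomp Require Import Rstruct Rstruct_topology generic_quotient.
From mathcomp Require Import ring.
From Stdlib Require Import Relation_Operators.
Set Implicit Arguments. Unset Strict Implicit. Unset Printing Implicit Defensive.
Import Order.TTheory GRing.Theory Num.Theory.
Local Open Scope classical_set_scope.
Local Open Scope ring_scope.
Local Open Scope quotient_scope.

(* [L_sep] is the quotient of [L] identifying two points that lie over the
   1-skeleton of the fan (the origin and the rays) and have the same values of
   [pi] and [phi].  As [(phi, pi)] is linear on each cone and a ray is spanned by
   any of its nonzero points, two cones having identified relative interior points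
   lie over the same ray and are glued entirely, so the images of the cones of [L]
   form a cone complex.  Adding the weights along the fibres of the quotient map
   preserves all traces over connected opens, because each component of a
   preimage in [L] maps into a single component in [L_sep].  Two cones of [L_sep]
   over a ray on which [phi] agrees are identified, which is separability, and
   [L_sep] is connected since every component of [L] surjects onto [N_R] while the
   fibre over [0] collapses to a point.  The quotient map gives [L_sep <= L]; for
   connected [L], [L_sep] is itself a common lower bound of [L] and [L_sep]. *)

Lemma lin0r (k : nat) (a : 'rV[R]_k) : lin a 0 = 0.
Proof. by rewrite /lin big1 // => i _; rewrite mxE mulr0. Qed.

Lemma lin0l (k : nat) (v : 'rV[R]_k) : lin 0 v = 0.
Proof. by rewrite /lin big1 // => i _; rewrite mxE mul0r. Qed.

Lemma lin_mulmx (k m : nat) (u : 'rV[R]_m) (v : 'rV[R]_k) (W : 'M[R]_(k, m)) :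
  lin u (v *m W) = lin (u *m W^T) v.
Proof.
rewrite /lin.
under eq_bigr => j _ do rewrite !mxE big_distrr /=.
rewrite exchange_big /=; apply: eq_bigr => i _; rewrite !mxE big_distrl /=.
by apply: eq_bigr => j _; rewrite !mxE; ring.
Qed.

Lemma lin_row_mx (k m : nat) (a1 v1 : 'rV[R]_k) (a2 v2 : 'rV[R]_m) :
  lin (row_mx a1 a2) (row_mx v1 v2) = lin a1 v1 + lin a2 v2.
Proof.
by rewrite /lin big_split_ord /=; congr (_ + _); apply: eq_bigr => i _;
  rewrite ?row_mxEl ?row_mxEr.
Qed.

Lemma continuous_sum (T : topologicalType) (I : Type) (s : seq I) (F : I -> T -> R) :
  (forall i, continuous (F i)) -> continuous (fun x => \sum_(i <- s) F i x).
Proof.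
move=> Fc; elim: s => [|i s IH].
  under eq_fun do rewrite big_nil; exact: cst_continuous.
under eq_fun do rewrite big_cons.
by move=> x; apply: (@continuousD R R^o); [exact: Fc | exact: IH].
Qed.

Lemma lin_continuous (k : nat) (u : 'rV[R]_k) : continuous (lin u).
Proof.
apply: continuous_sum => j v; apply: continuousM; first exact: cst_continuous.
exact: coord_continuous.
Qed.

Lemma mx_continuous (T : topologicalType) (m k : nat) (f : T -> 'M[R]_(m, k)) :
  (forall i j, continuous (fun x => f x i j)) -> continuous f.
Proof.
move=> fc x; apply/cvg_mx_entourageP => A entA.
have near_ij (ij : 'I_m * 'I_k) : \forall y \near x, (f x ij.1 ij.2, f y ij.1 ij.2) \in A.
  have fcij := fc ij.1 ij.2 x _ (nbhs_entourage (f x ij.1 ij.2) entA).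
  near=> y; have /xsectionP : xsection A (f x ij.1 ij.2) (f y ij.1 ij.2).
    by near: y; exact: fcij.
  by rewrite inE.
have := @filter_forall _ _ (fun ij y => (f x ij.1 ij.2, f y ij.1 ij.2) \in A)
  (nbhs x) (nbhs_filter x) near_ij.
by apply: filterS => y Hy i j; exact: (Hy (i, j)).
Unshelve. all: by end_near.
Qed.

Lemma posconeZ (k : nat) (s : seq 'rV[rat]_k) (t : R) v :
  0 <= t -> poscone s v -> poscone s (t *: v).
Proof.
move=> t0 [lam [lam0 ->]]; exists (fun j => t * lam j); split.
  by move=> j; apply: mulr_ge0.
by rewrite scaler_sumr; apply: eq_bigr => j _; rewrite scalerA.
Qed.

Lemma poscone_natP (k : nat) (s : seq 'rV[rat]_k) v :
  poscone s v <-> exists lam : nat -> R, (forall j, 0 <= lam j) /\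
     v = \sum_(0 <= j < size s) lam j *: map_mx ratr s`_j.
Proof.
split.
  case=> lam [lam0 ->].
  exists (fun j => if insub j is Some o then lam o else 0); split.
    by move=> j; case: insubP => //= o _ _; apply: lam0.
  by rewrite big_mkord; apply: eq_bigr => o _; rewrite valK.
by case=> lam [lam0 ->]; exists (fun o => lam o); split => //; rewrite big_mkord.
Qed.

Lemma poscone_mulmx (k m : nat) (s : seq 'rV[rat]_k) (W : 'M[rat]_(k, m)) :
  [set v *m map_mx ratr W | v in poscone s] = poscone [seq t *m W | t <- s].
Proof.
have mulW (lam : nat -> R) :
    (\sum_(0 <= j < size s) lam j *: map_mx ratr s`_j) *m map_mx ratr W
  = \sum_(0 <= j < size [seq t *m W | t <- s])
      lam j *: map_mx ratr [seq t *m W | t <- s]`_j.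
  rewrite mulmx_suml size_map big_nat_cond [RHS]big_nat_cond.
  apply: eq_bigr => j /andP[/andP[_ js] _].
  by rewrite (nth_map 0) // -scalemxAl map_mxM.
apply/seteqP; split => w.
  case=> v /poscone_natP [lam [lam0 ->]] <-.
  by apply/poscone_natP; exists lam; split.
case/poscone_natP => lam [lam0 ->].
exists (\sum_(0 <= j < size s) lam j *: map_mx ratr s`_j); last exact: mulW.
by apply/poscone_natP; exists lam.
Qed.

Lemma mxrank1_rows (m k : nat) (M : 'M[rat]_(m, k)) : \rank M = 1%N ->
  exists b : 'rV[rat]_k, forall j, exists c : rat, row j M = c *: b.
Proof.
move=> rk1.
have [j0 Mj0] : exists j0, row j0 M != 0.
  apply/not_existsP => M0; move: rk1; suff -> : M = 0 by rewrite mxrank0.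
  apply/row_matrixP => j; rewrite row0; apply/eqP; apply/negP => /negP Hn.
  exact: (M0 j).
set b := row j0 M; exists b.
have rkb : \rank b = 1%N.
  by apply/eqP; rewrite eqn_leq rank_leq_row /= lt0n mxrank_eq0.
have /andP[_ Mb] : (b == M)%MS by rewrite -(mxrank_leqif_eq (row_sub j0 M)).2 rkb rk1.
move=> j; have /submxP [D ->] : (row j M <= b)%MS by apply: submx_trans (row_sub j M) Mb.
by exists (D 0 0); rewrite {1}[D]mx11_scalar mul_scalar_mx.
Qed.

Lemma big_seq_partition (T1 T2 : eqType) (g : T1 -> T2) (Z : seq T2) (F : seq T1)
    (f : T1 -> nat) : uniq Z -> (forall x, x \in F -> g x \in Z) ->
  \sum_(z <- Z) \sum_(x <- F | g x == z) f x = \sum_(x <- F) f x.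
Proof.
move=> uZ gF; under eq_bigr => z _ do rewrite big_mkcond.
rewrite exchange_big /= big_seq [RHS]big_seq.
apply: eq_bigr => x xF; rewrite (bigD1_seq (g x)) ?gF //= eqxx.
by rewrite big1 ?addr0 // => z zx; rewrite eq_sym (negPf zx).
Qed.

Lemma rV_connected (k : nat) : connected [set: 'rV[R]_k].
Proof.
pose seg (v : 'rV[R]_k) := [set t *: v | t in `[0, 1]%classic].
have -> : [set: 'rV[R]_k] = \bigcup_(v in setT) seg v.
  apply/seteqP; split => v // _; exists v => //; exists 1; last by rewrite scale1r.
  by rewrite /= in_itv /= ler01 lexx.
apply: bigcup_connected.
  exists 0 => v _; exists 0; last by rewrite scale0r.
  by rewrite /= in_itv /= lexx ler01.
move=> v _; apply: connected_continuous_connected; first exact: segment_connected.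
by apply: continuous_subspaceT => t; apply: continuousZr_tmp; exact: cvg_id.
Qed.

Lemma embedding_on_image (X Y Z : topologicalType) (A : set X) (q : X -> Y)
    (p : X -> Z) (p' : Y -> Z) :
  continuous q -> continuous p' -> (forall x, p' (q x) = p x) ->
  embedding_on A p -> embedding_on (q @` A) p'.
Proof.
move=> qc p'c pE [_ [pinj pnbhs]]; split; first exact: continuous_subspaceT.
split; first by move=> _ _ [x1 x1A <-] [x2 x2A <-]; rewrite !pE => /pinj ->.
move=> _ [x xA <-] U Uqx; have := pnbhs x xA _ (qc x _ Uqx); rewrite pE.
apply: filterS.
by move=> y Hy _ [z zA <-]; rewrite pE => /(Hy z zA).
Qed.

Lemma embedding_on_factor (X Y Z : topologicalType) (A : set X) (f : X -> Y)
    (h : Y -> Z) :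
  continuous f -> continuous h -> embedding_on A (h \o f) -> embedding_on A f.
Proof.
move=> fc hc [_ [ginj gnbhs]]; split; first exact: continuous_subspaceT.
split; first by move=> x y xA yA Efxy; apply: ginj => //=; rewrite Efxy.
move=> x xA U Ux.
have : nbhs (f x) (h @^-1` [set w | forall z, A z -> h (f z) = w -> U z]).
  exact: hc (f x) _ (gnbhs x xA _ Ux).
apply: filterS => y Hy z zA Efz.
by apply: (Hy z zA); rewrite /= Efz.
Qed.

Section Fan.
Variables (n : nat) (S : fan n).
Hypothesis HS : is_fan S.

Lemma fan_meet_face (a b : fan_idx S) : exists u : 'rV[R]_n,
  (forall v, fan_cone a v -> 0 <= lin u v) /\
  fan_cone a `&` fan_cone b = fan_cone a `&` [set v | lin u v = 0].
Proof. by case: HS => _ _ _ /(_ a b) [[u [u0 Eu]] _]; exists u. Qed.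

Lemma fan_pointed (a : fan_idx S) v : fan_cone a v -> fan_cone a (- v) -> v = 0.
Proof. by case: HS => _ pointed _ _; apply: pointed. Qed.

Lemma fan_ray_scale (t : fan_idx S) y y' : fan_dim t = 1%N ->
  fan_cone t y -> y != 0 -> fan_cone t y' -> exists c, 0 <= c /\ y' = c *: y.
Proof.
rewrite /fan_dim => /mxrank1_rows [b Hb] ty y0 ty'.
set g := fan_gens t in Hb.
have /choice [cf Ecf] : forall j : nat, exists c : rat, g`_j = c *: b.
  move=> j; case: (ltnP j (size g)) => js.
    have [c Hc] := Hb (Ordinal js); exists c; rewrite -Hc.
    by apply/rowP => l; rewrite !mxE.
  by exists 0; rewrite nth_default // scale0r.
set bR := map_mx ratr b : 'rV[R]_n.
have onb v : fan_cone t v -> exists m : R, v = m *: bR.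
  case/poscone_natP => lam [_ ->].
  exists (\sum_(0 <= j < size g) lam j * ratr (cf j)).
  by rewrite scaler_suml; apply: eq_bigr => j _; rewrite Ecf map_mxZ scalerA.
have [m1 E1] := onb _ ty; have [m2 E2] := onb _ ty'.
have m10 : m1 != 0 by apply: contraNneq y0 => m0; rewrite E1 m0 scale0r.
have Ey' : y' = (m2 / m1) *: y by rewrite E1 scalerA mulfVK.
have [c0|c0] := leP 0 (m2 / m1); first by exists (m2 / m1).
exists 0; split => //; rewrite scale0r; apply: (fan_pointed ty').
by rewrite Ey' -scaleNr; apply: posconeZ => //; rewrite oppr_ge0 ltW.
Qed.

Definition skel1 (y : 'rV[R]_n) : Prop :=
  y = 0 \/ exists t : fan_idx S, fan_dim t = 1%N /\ fan_cone t y.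

End Fan.

Section Separation.
Variables (n : nat) (S : fan n) (r : nat) (L : tlms_data n).
Hypotheses (HS : is_fan S) (HSc : complete_fan S) (HL : is_tlms S r L).

Local Notation X := (tl_space L).
Local Notation I := (cc_idx (tl_cc L)).
Local Notation pi := (tl_pi L).
Local Notation phi := (tl_phi L).
Local Notation mu := (tl_mu L).
Local Notation cone := (@cc_cone _ (tl_cc L)).
Local Notation ev := (@cc_ev _ (tl_cc L)).

Lemma L_cone_complex : is_cone_complex (tl_cc L).
Proof. by case: HL. Qed.

Lemma L_covering : branched_covering (tl_cc L) (fan_cc S) mu pi.
Proof. by case: HL. Qed.

Lemma L_trace y : trace_is setT pi mu y r.
Proof. by case: HL. Qed.

Lemma tl_phi_continuous : continuous phi.
Proof. by case: HL. Qed.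

Lemma phi_inM (i : I) : inM i phi.
Proof. by case: HL. Qed.

Lemma tl_pi_continuous : continuous pi.
Proof. by case: L_covering => _ []. Qed.

Lemma pi_surj y : exists x, pi x = y.
Proof. by case: L_covering => _ _ + _ _; apply. Qed.

Lemma mu_gt0 x : (0 < mu x)%N.
Proof. by case: L_covering => -[+ _] _ _ _ _; apply. Qed.

Lemma mu_relint (i : I) x y : relint i x -> relint i y -> mu x = mu y.
Proof. by case: L_covering => -[_ +] _ _ _ _; apply. Qed.

Lemma pi_cone_morphism (i : I) : exists t : fan_idx S,
  (forall x, cone i x -> fan_cone t (pi x)) /\
  (forall g, @inM _ (fan_cc S) t g -> inM i (g \o pi)).
Proof. by case: L_covering => _ [_ +] _ _ _; apply. Qed.

Lemma pi_cone_onto (i : I) : exists t : fan_idx S,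
  pi @` cone i = fan_cone t /\ embedding_on (cone i) pi.
Proof. by case: L_covering => _ _ _ + _; apply. Qed.

Lemma pi_inj_cone (i : I) x y : cone i x -> cone i y -> pi x = pi y -> x = y.
Proof. by have [t [_ [_ [+ _]]]] := pi_cone_onto i; apply. Qed.

Lemma relint_exists_unique x : exists! i : I, relint i x.
Proof. by case: L_cone_complex => _ _ _ _; apply. Qed.

Lemma cone_cover x : exists i : I, cone i x.
Proof. by have [i [[xi _] _]] := relint_exists_unique x; exists i. Qed.

Lemma ev_poscone (i : I) : exists s, ev i @` cone i = poscone s.
Proof. by case: L_cone_complex => _ _ /(_ i) [_]. Qed.

Lemma cone_face (i : I) (a : 'rV[R]_(cc_dim i)) : supp_fun a ->
  exists j : I, cone j = cone i `&` [set x | lin a (ev i x) = 0].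
Proof. by case: L_cone_complex => _ _ _ + _ => /(_ i a) H /H [j [Ej _]]; exists j. Qed.

Lemma cone_closed (i : I) : closed (cone i).
Proof. by case: L_cone_complex. Qed.

Definition phipi (x : X) : 'rV[R]_(1 + n) := row_mx (phi x)%:M (pi x).

Lemma phipi_pi x y : phipi x = phipi y -> pi x = pi y.
Proof. by case/eq_row_mx. Qed.

Lemma phipi_phi x y : phipi x = phipi y -> phi x = phi y.
Proof.
case/eq_row_mx => /(congr1 (fun M : 'M[R]_1 => M 0 0)) + _.
by rewrite !mxE /= !mulr1n.
Qed.

Lemma phipi_scale x y t : phipi x = t *: phipi y -> pi x = t *: pi y.
Proof. by rewrite /phipi scale_row_mx => /eq_row_mx []. Qed.

Lemma phipi_inj_cone (i : I) x y : cone i x -> cone i y -> phipi x = phipi y -> x = y.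
Proof. by move=> xi yi /phipi_pi; exact: pi_inj_cone xi yi. Qed.

Lemma lin_phipi (u : 'rV[R]_n) x : lin (row_mx 0 u) (phipi x) = lin u (pi x).
Proof. by rewrite lin_row_mx lin0l add0r. Qed.

Lemma phipi_continuous : continuous phipi.
Proof.
apply: mx_continuous => i k; rewrite -[k]splitK; case: (fintype.split k) => [k0|l].
  have -> : (fun x => phipi x i (unsplit (inl k0))) = phi.
    by apply: funext => x; rewrite row_mxEl !ord1 mxE eqxx mulr1n.
  exact: tl_phi_continuous.
have -> : (fun x => phipi x i (unsplit (inr l))) = (fun v : 'rV[R]_n => v 0 l) \o pi.
  by apply: funext => x; rewrite row_mxEr !ord1.
by move=> x; apply: continuous_comp; [exact: tl_pi_continuous | exact: coord_continuous].
Qed.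

Lemma phipi_linear (i : I) : exists W : 'M[int]_(cc_dim i, 1 + n),
  forall x, cone i x -> phipi x = ev i x *m map_mx intr W.
Proof.
have [zf Ezf] := phi_inM i.
have [t [_ pi_inM]] := pi_cone_morphism i.
have /choice [zp Ezp] : forall l : 'I_n, exists z : 'I_(cc_dim i) -> int,
    forall x, cone i x -> pi x 0 l = \sum_(k < cc_dim i) (z k)%:~R * cc_gen k x.
  move=> l; have [|z Ez] := pi_inM (fun y => y 0 l); last by exists z.
  exists (fun k => (k == l)%:R) => y _ /=.
  rewrite (bigD1 l) //= eqxx big1 ?addr0 ?mul1r // => k /negPf ->.
  by rewrite mul0r.
exists (\matrix_(m, k) match fintype.split k with inl _ => zf m | inr l => zp l m end).
move=> x xi; apply/rowP => k; rewrite -[k]splitK; case: (fintype.split k) => [k0|l] /=.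
  rewrite row_mxEl mxE ord1 eqxx mulr1n Ezf // !mxE; apply: eq_bigr => m _.
  by rewrite !mxE (unsplitK (inl _)) mulrC.
rewrite row_mxEr Ezp // !mxE; apply: eq_bigr => m _.
by rewrite !mxE (unsplitK (inr _)) mulrC.
Qed.

Lemma lin_phipi_pullback (i : I) (u : 'rV[R]_(1 + n)) : exists a : 'rV_(cc_dim i),
  forall x, cone i x -> lin a (ev i x) = lin u (phipi x).
Proof.
have [W EW] := phipi_linear i; exists (u *m (map_mx intr W)^T) => x xi.
by rewrite EW // lin_mulmx.
Qed.

Lemma lin_pi_pullback (i : I) (u : 'rV[R]_n) : exists a : 'rV_(cc_dim i),
  forall x, cone i x -> lin a (ev i x) = lin u (pi x).
Proof.
have [a Ea] := lin_phipi_pullback i (row_mx 0 u); exists a => x xi.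
by rewrite Ea // lin_phipi.
Qed.

Lemma cone_scale (i : I) x t : cone i x -> 0 <= t ->
  exists2 w, cone i w & phipi w = t *: phipi x.
Proof.
move=> xi t0; have [s Es] := ev_poscone i; have [W EW] := phipi_linear i.
have : poscone s (t *: ev i x) by apply: posconeZ => //; rewrite -Es; exists x.
by rewrite -Es => -[w wi Ew]; exists w; rewrite // !EW // Ew scalemxAl.
Qed.

Lemma phipi_over0 x : pi x = 0 -> phipi x = 0.
Proof.
move=> px0; have [i xi] := cone_cover x.
have [w wi] := cone_scale xi (le_refl 0); rewrite scale0r => Ew.
have pw0 : pi w = 0 by move: Ew; rewrite -row_mx0 => /eq_row_mx [_ ->].
by rewrite -(pi_inj_cone wi xi) // pw0 px0.
Qed.

Lemma cone_fan_face (i : I) (t : fan_idx S) : exists u : 'rV[R]_n,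
  (forall y, cone i y -> 0 <= lin u (pi y)) /\
  (forall y, cone i y -> fan_cone t (pi y) <-> lin u (pi y) = 0).
Proof.
have [s [Es _]] := pi_cone_onto i.
have [u [u0 Eu]] := fan_meet_face HS s t.
have sP y : cone i y -> fan_cone s (pi y) by move=> yi; rewrite -Es; exists y.
exists u; split => [y /sP /u0 //|y /sP sy]; split => [ty|uy].
  by have : (fan_cone s `&` fan_cone t) (pi y) by []; rewrite Eu => -[].
by have : (fan_cone s `&` [set v | lin u v = 0]) (pi y) by []; rewrite -Eu => -[].
Qed.

Lemma relint_pi_face (i : I) (u : 'rV[R]_n) x w : relint i x ->
  (forall y, cone i y -> 0 <= lin u (pi y)) -> lin u (pi x) = 0 ->
  cone i w -> lin u (pi w) = 0.
Proof.
move=> [xi rel_x] u0 ux wi; have [a Ea] := lin_pi_pullback i u.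
rewrite -Ea //; apply: (rel_x a) => //; last by rewrite Ea.
by move=> y yi; rewrite Ea //; apply: u0.
Qed.

Lemma relint_fan_face (i : I) (t : fan_idx S) x w :
  relint i x -> fan_cone t (pi x) -> cone i w -> fan_cone t (pi w).
Proof.
move=> rx tx wi; have [u [u0 Eu]] := cone_fan_face i t.
by apply/(Eu w wi)/(relint_pi_face rx u0 _ wi)/(Eu x (proj1 rx)).
Qed.

Lemma relint_over0 (i : I) x w : relint i x -> pi x = 0 -> cone i w -> w = x.
Proof.
move=> rx px0 wi.
have [pw|pw0] := eqVneq (pi w) 0; first by apply: pi_inj_cone wi (proj1 rx) _; rewrite px0.
have [rho rho_w] := HSc (- pi w).
have [u [u0 Eu]] := cone_fan_face i rho.
have rho_pw : fan_cone rho (pi w).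
  by apply/(Eu w wi)/(relint_pi_face rx u0 _ wi); rewrite px0 lin0r.
by move: pw0; rewrite (fan_pointed HS rho_pw rho_w) eqxx.
Qed.

Definition glue (x y : X) : bool :=
  `[< x = y \/ (phipi x = phipi y /\ skel1 S (pi x)) >].

Lemma glue_refl : reflexive glue.
Proof. by move=> x; apply/asboolP; left. Qed.

Lemma glue_sym : symmetric glue.
Proof.
by move=> x y; apply/asboolP/asboolP => -[->|[E sk]]; [left | right | left | right];
  rewrite // E -(phipi_pi E).
Qed.

Lemma glue_trans : transitive glue.
Proof.
move=> y x z /asboolP [->|[Exy sk]] /asboolP gyz; apply/asboolP => //.
by case: gyz => [<-|[Eyz _]]; right; rewrite ?Exy ?Eyz.
Qed.

Definition glue_equiv := EquivRel glue glue_refl glue_sym glue_trans.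
Definition Xsep0 := {eq_quot glue_equiv}.
Definition Xsep : topologicalType := quotient_topology Xsep0.
Definition q : X -> Xsep := \pi_Xsep.

Lemma glueP x y : reflect (q x = q y) (glue x y).
Proof. exact: (@eqmodP _ glue_equiv x y). Qed.

Lemma q_continuous : continuous q.
Proof. exact: pi_continuous. Qed.

Lemma q_repr (z : Xsep) : q (repr z) = z.
Proof. by rewrite /q reprK. Qed.

Lemma q_surj (z : Xsep) : exists x, q x = z.
Proof. by exists (repr z); rewrite q_repr. Qed.

Lemma glue_phipi x y : glue x y -> phipi x = phipi y.
Proof. by move/asboolP => [->|[]]. Qed.

Definition pi_sep (z : Xsep) := pi (repr z).
Definition phi_sep (z : Xsep) := phi (repr z).
Definition phipi_sep (z : Xsep) : 'rV[R]_(1 + n) := row_mx (phi_sep z)%:M (pi_sep z).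

Lemma phipi_sep_q x : phipi_sep (q x) = phipi x.
Proof. by apply: glue_phipi; apply/glueP; rewrite q_repr. Qed.

Lemma pi_sep_q x : pi_sep (q x) = pi x.
Proof. exact: phipi_pi (phipi_sep_q x). Qed.

Lemma phi_sep_q x : phi_sep (q x) = phi x.
Proof. exact: phipi_phi (phipi_sep_q x). Qed.

Lemma continuous_sep (Z : topologicalType) (f : Xsep -> Z) (g : X -> Z) :
  (forall x, f (q x) = g x) -> continuous g -> continuous f.
Proof.
move=> fE gc; apply/quotient_continuous.
by have -> : f \o q = g by apply: funext => x /=; rewrite fE.
Qed.

Lemma pi_sep_continuous : continuous pi_sep.
Proof. exact: continuous_sep pi_sep_q tl_pi_continuous. Qed.

Lemma phi_sep_continuous : continuous phi_sep.
Proof. exact: continuous_sep phi_sep_q tl_phi_continuous. Qed.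

Lemma phipi_sep_continuous : continuous phipi_sep.
Proof. exact: continuous_sep phipi_sep_q phipi_continuous. Qed.

Lemma q_inj_cone (i : I) x y : cone i x -> cone i y -> q x = q y -> x = y.
Proof. by move=> xi yi /glueP /glue_phipi; exact: phipi_inj_cone xi yi. Qed.

Definition cone_sep (i : I) : set Xsep := q @` cone i.

(* cones of [L] with the same image in [Xsep] give one cone of [Xsep], indexed by
   the least of them *)
Definition least_index (i : I) : bool :=
  `[< forall j : I, cone_sep j = cone_sep i -> (enum_rank i <= enum_rank j)%N >].
Definition Isep := {i : I | least_index i}.

Lemma Isep_rep (i : I) : exists j : Isep, cone_sep (val j) = cone_sep i.
Proof.
pose P j := `[< cone_sep j = cone_sep i >].
have Pi : P i by apply/asboolP.
case: (arg_minnP (fun j => enum_rank j) Pi) => j /asboolP Ej jmin.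
have lj : least_index j.
  by apply/asboolP => j' Ej'; apply: jmin; apply/asboolP; rewrite Ej' Ej.
by exists (exist _ j lj).
Qed.

Lemma Isep_inj (a b : Isep) : cone_sep (val a) = cone_sep (val b) -> a = b.
Proof.
case: a b => [a la] [b lb] /= Eab.
have lab := asboolP _ la b (esym Eab); have lba := asboolP _ lb a Eab.
have : enum_rank a = enum_rank b by apply/val_inj/eqP; rewrite eqn_leq lab lba.
by move/enum_rank_inj => Eab'; subst b; congr exist; exact: bool_irrelevance.
Qed.

Definition cc_sep : cone_complex Xsep :=
  @ConeComplex Xsep Isep (fun j => cone_sep (val j)) (fun _ => (1 + n)%N)
    (fun _ k z => phipi_sep z 0 k).

Local Notation relint_sep := (@relint _ cc_sep).

Lemma gen_sepE (j : Isep) k z : @cc_gen _ cc_sep j k z = phipi_sep z 0 k.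
Proof. by []. Qed.

Lemma ev_sepE (j : Isep) z : @cc_ev _ cc_sep j z = phipi_sep z.
Proof. by apply/rowP => k; rewrite mxE. Qed.

Lemma relint_sep_of_relint (j : Isep) (i : I) x :
  cone_sep (val j) = cone_sep i -> relint i x -> relint_sep j (q x).
Proof.
move=> Eji [xi rel_x]; split; first by rewrite /= Eji; exists x.
move=> a sa ax y; rewrite /= Eji => -[w wi <-].
have [b Eb] := lin_phipi_pullback i a.
have sb : supp_fun b.
  move=> w' w'i; rewrite Eb // -phipi_sep_q -(ev_sepE j).
  by apply: sa; rewrite /= Eji; exists w'.
move: ax; rewrite ev_sepE phipi_sep_q -Eb // => /(rel_x b sb) /(_ w wi).
by rewrite Eb // ev_sepE phipi_sep_q.
Qed.

Lemma relint_of_relint_sep (j : Isep) (i : I) x :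
  cone_sep (val j) = cone_sep i -> cone i x -> relint_sep j (q x) -> relint i x.
Proof.
move=> Eji xi [_ rel_qx]; split => // b sb bx w wi.
have [m Em] := cone_face sb.
have xm : cone m x by rewrite Em.
have [sm [Esm _]] := pi_cone_onto m.
have [u [u0 Eu]] := cone_fan_face i sm.
have lin_u y : lin (row_mx 0 u) (@cc_ev _ cc_sep j (q y)) = lin u (pi y).
  by rewrite ev_sepE phipi_sep_q lin_phipi.
have uw : lin u (pi w) = 0.
  rewrite -lin_u; apply: rel_qx; last by rewrite /= Eji; exists w.
    by move=> z; rewrite /= Eji => -[y yi <-]; rewrite lin_u; apply: u0.
  by rewrite lin_u; apply/(Eu x xi); rewrite -Esm; exists x.
have := (Eu w wi).2 uw; rewrite -Esm => -[w1 w1m Ew1].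
have w1i : cone i w1 by move: w1m; rewrite Em => -[].
by move: w1m; rewrite (pi_inj_cone w1i wi Ew1) Em => -[].
Qed.

(* Points glued over a ray of the fan glue the whole cones: scaling by [c >= 0]
   preserves [phipi], and every point of a cone over a ray is such a multiple. *)
Lemma glue_relint_cone (i1 i2 : I) x1 x2 w : relint i1 x1 -> relint i2 x2 ->
  phipi x1 = phipi x2 -> skel1 S (pi x1) -> cone i1 w -> exists2 w', cone i2 w' & glue w w'.
Proof.
move=> r1 r2 E12 sk wi.
have [p0|pn0] := eqVneq (pi x1) 0.
  rewrite (relint_over0 r1 p0 wi); exists x2; first by case: r2.
  by apply/asboolP; right.
case: sk => [/eqP p0|[t [dt tx]]]; first by rewrite p0 in pn0.
have tw := relint_fan_face r1 tx wi.
have [c [c0 Ec]] := fan_ray_scale HS dt tx pn0 tw.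
have [w1 w1i E1] := cone_scale (proj1 r1) c0.
have Ew1 : w1 = w by apply: pi_inj_cone w1i wi _; rewrite (phipi_scale E1) Ec.
subst w1.
have [w2 w2i E2] := cone_scale (proj1 r2) c0.
exists w2 => //; apply/asboolP; right; split; first by rewrite E1 E2 E12.
by right; exists t.
Qed.

Lemma glue_relint_cone_sep (i1 i2 : I) x1 x2 : relint i1 x1 -> relint i2 x2 ->
  glue x1 x2 -> cone_sep i1 = cone_sep i2.
Proof.
move=> r1 r2 /asboolP [Ex|[E sk]].
  subst x2; have [i [_ iuniq]] := relint_exists_unique x1.
  by rewrite -(iuniq _ r1) -(iuniq _ r2).
have sk2 : skel1 S (pi x2) by rewrite -(phipi_pi E).
apply/seteqP; split => _ [w wi <-].
  by have [w' w'i /glueP] := glue_relint_cone r1 r2 E sk wi; exists w'.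
by have [w' w'i /glueP] := glue_relint_cone r2 r1 (esym E) sk2 wi; exists w'.
Qed.

Lemma relint_sep_exists_unique z : exists! j : Isep, relint_sep j z.
Proof.
have [x <-] := q_surj z.
have [i [ri _]] := relint_exists_unique x.
have [j Ej] := Isep_rep i.
exists j; split; first exact: relint_sep_of_relint Ej ri.
move=> j' rj'.
have [x' x'j' qx'] : exists2 x', cone (val j') x' & q x' = q x.
  by case: rj' => -[x' ? ?] _; exists x'.
move: rj'; rewrite -qx' => /(relint_of_relint_sep erefl x'j') rx'.
by apply: Isep_inj; rewrite Ej; apply/esym/(glue_relint_cone_sep rx' ri)/glueP.
Qed.

Lemma pi_sep_embedding (i : I) : embedding_on (cone_sep i) pi_sep.
Proof.
have [t [_ emb]] := pi_cone_onto i.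
exact: embedding_on_image q_continuous pi_sep_continuous pi_sep_q emb.
Qed.

Lemma phipi_sep_embedding (i : I) : embedding_on (cone_sep i) phipi_sep.
Proof.
have rsubmx_continuous : continuous (fun v : 'rV[R]_(1 + n) => rsubmx v).
  apply: mx_continuous => k l.
  have -> : (fun v : 'rV[R]_(1 + n) => rsubmx v k l) = (fun v => v k (rshift 1 l)).
    by apply: funext => v; rewrite mxE.
  exact: coord_continuous.
apply: embedding_on_factor phipi_sep_continuous rsubmx_continuous _.
have -> : (fun v : 'rV[R]_(1 + n) => rsubmx v) \o phipi_sep = pi_sep.
  by apply: funext => z; rewrite /= row_mxKr.
exact: pi_sep_embedding.
Qed.

Lemma phipi_sep_poscone (i : I) : exists s, phipi_sep @` cone_sep i = poscone s.
Proof.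
have [s Es] := ev_poscone i; have [W EW] := phipi_linear i.
exists [seq t *m map_mx intr W | t <- s]; rewrite -poscone_mulmx -Es.
have ratrW : map_mx ratr (map_mx intr W) = map_mx intr W :> 'M[R]_(_, _).
  by rewrite -map_mx_comp; apply/matrixP => a b; rewrite !mxE /= ratr_int.
apply/seteqP; split => v.
  by case=> _ [x xi <-] <-; exists (ev i x); [exists x | rewrite phipi_sep_q EW // ratrW].
by case=> _ [x xi <-] <-; exists (q x); [exists x | rewrite phipi_sep_q EW // ratrW].
Qed.

Lemma cone_sep_face (j : Isep) (a : 'rV[R]_(1 + n)) : @supp_fun _ cc_sep j a ->
  exists j' : Isep, cone_sep (val j') =
    cone_sep (val j) `&` [set z | lin a (@cc_ev _ cc_sep j z) = 0] /\
    forall f, @inM _ cc_sep j' f <-> @inM_restr _ cc_sep j j' f.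
Proof.
move=> sa; have [b Eb] := lin_phipi_pullback (val j) a.
have lin_ab w : cone (val j) w -> lin a (@cc_ev _ cc_sep j (q w)) = lin b (ev (val j) w).
  by move=> wj; rewrite ev_sepE phipi_sep_q Eb.
have sb : supp_fun b by move=> w wj; rewrite -lin_ab //; apply: sa; exists w.
have [m Em] := cone_face sb.
have [j' Ej'] := Isep_rep m.
exists j'; split => //; rewrite Ej'; apply/seteqP; split => z.
  case=> w; rewrite Em => -[wj wb] <-; split; first by exists w.
  by rewrite /= lin_ab.
case=> -[w wj <-] /=; rewrite lin_ab // => wb.
by exists w => //; rewrite Em.
Qed.

Lemma pi_sep_morphism : cc_morphism cc_sep (fan_cc S) pi_sep.
Proof.
split; first exact: pi_sep_continuous.
move=> j; have [t [pi_t pi_inM]] := pi_cone_morphism (val j).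
exists t; split; first by move=> _ [x xj <-]; rewrite pi_sep_q; apply: pi_t.
move=> g [z Ez].
exists (fun k : 'I_(1 + n) => if fintype.split k is inr l then z l else 0).
move=> _ [x xj <-] /=; rewrite Ez; last by rewrite pi_sep_q; apply: pi_t.
rewrite big_split_ord /= [X in _ = X + _]big1 ?add0r; last first.
  by move=> k _; rewrite (unsplitK (inl _)) mul0r.
by apply: eq_bigr => l _; rewrite (unsplitK (inr _)) row_mxEr.
Qed.

Lemma pi_sep_cone_onto (j : Isep) : exists t : fan_idx S,
  pi_sep @` cone_sep (val j) = fan_cone t /\ embedding_on (cone_sep (val j)) pi_sep.
Proof.
have [t [Et _]] := pi_cone_onto (val j); exists t; split; last exact: pi_sep_embedding.
rewrite -Et; apply/seteqP; split => z.
  by case=> _ [x xj <-] <-; exists x; rewrite ?pi_sep_q.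
by case=> x xj <-; exists (q x); [exists x | rewrite pi_sep_q].
Qed.

Lemma phi_sep_inM (j : Isep) : @inM _ cc_sep j phi_sep.
Proof.
exists (fun k : 'I_(1 + n) => if fintype.split k is inl _ then 1 else 0).
move=> z _ /=; rewrite big_split_ord /= big_ord1 (unsplitK (inl _)).
rewrite big1 ?addr0; last by move=> l _; rewrite (unsplitK (inr _)) mul0r.
by rewrite row_mxEl mxE eqxx mulr1n mul1r.
Qed.

Definition fibre (y : 'rV[R]_n) : seq X := sval (cid (L_trace y)).

Lemma fibre_uniq y : uniq (fibre y).
Proof. by rewrite /fibre; case: cid => s []. Qed.

Lemma fibre_mem y x : (x \in fibre y) = `[< pi x = y >].
Proof.
rewrite /fibre; case: cid => s [_ [Es _]] /=.
by apply/idP/asboolP => [/Es [] | px]; last exact/Es.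
Qed.

Lemma fibre_sum y : \sum_(x <- fibre y) mu x = r.
Proof. by rewrite /fibre; case: cid => s [_ [_ Es]] /=; rewrite -Es sumnE big_map. Qed.

Definition qfibre (z : Xsep) : seq X := [seq x <- fibre (pi_sep z) | q x == z].
Definition mu_sep (z : Xsep) : nat := \sum_(x <- qfibre z) mu x.

Lemma qfibre_uniq z : uniq (qfibre z).
Proof. exact/filter_uniq/fibre_uniq. Qed.

Lemma qfibre_mem z x : (x \in qfibre z) = (q x == z).
Proof.
rewrite mem_filter fibre_mem; case: eqP => //= <-.
by apply/asboolP; rewrite pi_sep_q.
Qed.

Lemma mu_sep_gt0 z : (0 < mu_sep z)%N.
Proof.
have [x <-] := q_surj z; rewrite /mu_sep (bigD1_seq x) ?qfibre_uniq //=.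
  by rewrite addn_gt0 mu_gt0.
by rewrite qfibre_mem.
Qed.

Lemma sum_mu_sep_fibre y (P : pred Xsep) :
  \sum_(z <- undup [seq q x | x <- fibre y & P (q x)]) mu_sep z =
  \sum_(x <- fibre y | P (q x)) mu x.
Proof.
set Z := undup _.
rewrite -[RHS]big_filter -(@big_seq_partition _ _ q Z _ mu (undup_uniq _)); last first.
  by move=> x; rewrite mem_undup => xF; apply/mapP; exists x.
rewrite big_seq [RHS]big_seq; apply: eq_bigr => _ /[!mem_undup] /mapP [x0 x0in ->].
move: x0in; rewrite mem_filter fibre_mem => /andP[Px0 /asboolP px0].
rewrite /mu_sep /qfibre pi_sep_q px0 !big_filter big_filter_cond; apply: eq_bigl => x.
by case: eqP => [->|]; rewrite ?Px0 ?andbF ?andbT.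
Qed.

Lemma q_fibre_trace y (P : pred Xsep) :
  trace_is P pi_sep mu_sep y (\sum_(x <- fibre y | P (q x)) mu x).
Proof.
exists (undup [seq q x | x <- fibre y & P (q x)]); split; first exact: undup_uniq.
split; last by rewrite sumnE big_map sum_mu_sep_fibre.
move=> z; rewrite mem_undup; split.
  move=> [Pz Ez]; apply/mapP; exists (repr z); last by rewrite q_repr.
  by rewrite mem_filter fibre_mem q_repr Pz; apply/asboolP.
case/mapP => x; rewrite mem_filter fibre_mem => /andP[Px /asboolP px] ->.
by split => //; rewrite pi_sep_q.
Qed.

Lemma pi_sep_trace y : trace_is setT pi_sep mu_sep y r.
Proof.
have [s [us [Es sum_s]]] := q_fibre_trace y predT.
exists s; split => //; split; first by move=> z; rewrite -(Es z); split => -[_ ->].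
by rewrite sum_s -(fibre_sum y).
Qed.

Lemma q_trace z : trace_is setT q mu z (mu_sep z).
Proof.
exists (qfibre z); split; first exact: qfibre_uniq.
split; last by rewrite sumnE big_map.
by move=> x; rewrite qfibre_mem; split; [case=> _ /eqP | move/eqP].
Qed.

Lemma relint_exists x : exists i : I, relint i x.
Proof. by have [i [ri _]] := relint_exists_unique x; exists i. Qed.

Definition relint_cone (x : X) : I := sval (cid (relint_exists x)).

Lemma relint_coneP x : relint (relint_cone x) x.
Proof. exact: svalP (cid (relint_exists x)). Qed.

Lemma relint_coneE (i : I) x : relint i x -> relint_cone x = i.
Proof.
move=> ri; have [i0 [_ iuniq]] := relint_exists_unique x.
by rewrite -(iuniq _ ri) -(iuniq _ (relint_coneP x)).
Qed.

Lemma cone_sep_relint_sep (j : Isep) x :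
  relint_sep j (q x) -> cone_sep (val j) = cone_sep (relint_cone x).
Proof.
move=> rj; have [j' Ej'] := Isep_rep (relint_cone x).
have rj' := relint_sep_of_relint Ej' (relint_coneP x).
have [j0 [_ juniq]] := relint_sep_exists_unique (q x).
by rewrite -Ej' -(juniq _ rj) -(juniq _ rj').
Qed.

Lemma relint_sep_transport (j : Isep) z1 z2 x :
  relint_sep j z1 -> relint_sep j z2 -> q x = z1 ->
  exists w, q w = z2 /\ relint_cone w = relint_cone x.
Proof.
move=> r1 r2 qx; rewrite -qx in r1.
have Ej := cone_sep_relint_sep r1.
case: (r2) => + _; rewrite /= Ej => -[w wi qw]; exists w; split => //.
by apply: relint_coneE; apply: (relint_of_relint_sep Ej wi); rewrite qw.
Qed.

Lemma mu_sep_relint (j : Isep) z1 z2 :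
  relint_sep j z1 -> relint_sep j z2 -> mu_sep z1 = mu_sep z2.
Proof.
move=> r1 r2.
have /choice [h hP] : forall x, exists w,
    q x = z1 -> q w = z2 /\ relint_cone w = relint_cone x.
  move=> x; case: (pselect (q x = z1)) => [qx|nqx]; last by exists x => /nqx.
  by have [w Hw] := relint_sep_transport r1 r2 qx; exists w.
have cone_h x : q x = z1 -> cone (relint_cone x) (h x).
  by move=> qx; have [_ <-] := hP x qx; exact: (relint_coneP _).1.
have h_inj : {in qfibre z1 &, injective h}.
  move=> x x' /[!qfibre_mem] /eqP qx /eqP qx' Ehx.
  have [_ Ex] := hP x qx; have [_ Ex'] := hP x' qx'.
  apply: (q_inj_cone (relint_coneP x).1); last by rewrite qx qx'.
  by rewrite -Ex Ehx Ex'; exact: (relint_coneP _).1.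
have h_onto : map h (qfibre z1) =i qfibre z2.
  move=> x2; apply/mapP/idP.
    by case=> x1 /[!qfibre_mem] /eqP qx1 ->; have [-> _] := hP x1 qx1.
  rewrite qfibre_mem => /eqP qx2.
  have [x1 [qx1 Ex1]] := relint_sep_transport r2 r1 qx2.
  exists x1; first by rewrite qfibre_mem qx1.
  apply: (q_inj_cone (relint_coneP x2).1); last by have [-> _] := hP x1 qx1.
  by rewrite -Ex1; exact: cone_h.
rewrite /mu_sep -(perm_big _ (uniq_perm _ (qfibre_uniq z2) h_onto)); last first.
  by rewrite map_inj_in_uniq ?qfibre_uniq.
rewrite big_map big_seq [RHS]big_seq; apply: eq_bigr => x /[!qfibre_mem] /eqP qx.
have [_ Ex] := hP x qx.
by have := relint_coneP (h x); rewrite Ex => rhx; exact: mu_relint (relint_coneP x) rhx.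
Qed.

Lemma component_trace (U : set 'rV[R]_n) x : open U -> connected U -> U (pi x) ->
  exists c, forall y, U y ->
    \sum_(w <- fibre y | `[< connected_component (pi @^-1` U) x w >]) mu w = c.
Proof.
move=> oU cU Ux; case: L_covering => _ _ _ _ /(_ U oU cU).
move=> /(_ _ (ex_intro _ x (conj Ux erefl))).
case=> c Hc; exists c => y Uy; have [s [us [Es <-]]] := Hc y Uy.
rewrite -big_filter sumnE big_map.
apply/perm_big/uniq_perm; rewrite ?filter_uniq ?fibre_uniq //.
move=> w; rewrite mem_filter fibre_mem; apply/andP/idP.
  by case=> /asboolP w_comp /asboolP pw; apply/Es.
by move/Es => [w_comp pw]; split; apply/asboolP.
Qed.

Lemma component_onto (U : set 'rV[R]_n) x y : open U -> connected U -> U (pi x) ->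
  U y -> exists w, connected_component (pi @^-1` U) x w /\ pi w = y.
Proof.
move=> oU cU Ux Uy; have [c Hc] := component_trace oU cU Ux.
have c_gt0 : (0 < c)%N.
  rewrite -(Hc _ Ux) -big_filter (bigD1_seq x) ?filter_uniq ?fibre_uniq //=.
    by rewrite addn_gt0 mu_gt0.
  rewrite mem_filter fibre_mem; apply/andP; split; apply/asboolP => //.
  exact: connected_component_refl.
have /hasP [w] : has (fun w => `[< connected_component (pi @^-1` U) x w >]) (fibre y).
  by apply/negPn/negP => hn; move: c_gt0; rewrite -(Hc _ Uy) big_hasC.
by rewrite fibre_mem => /asboolP pw /asboolP w_comp; exists w.
Qed.

Lemma q_component (U : set 'rV[R]_n) z0 x w :
  connected_component (pi_sep @^-1` U) z0 (q x) ->
  connected_component (pi @^-1` U) x w ->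
  connected_component (pi_sep @^-1` U) z0 (q w).
Proof.
move=> Vx Cw; have Ux : U (pi x) by rewrite -pi_sep_q; apply: connected_component_sub Vx.
rewrite (same_connected_component Vx).
apply: (@connected_component_max _ _ (q @` connected_component (pi @^-1` U) x)).
- by exists x => //; apply: connected_component_refl.
- by move=> _ [w' Cw' <-]; rewrite /preimage /= pi_sep_q; apply: connected_component_sub Cw'.
- apply: connected_continuous_connected; first exact: component_connected.
  exact: continuous_subspaceT q_continuous.
- by exists w.
Qed.

Section ComponentTrace.
Variables (U : set 'rV[R]_n) (z0 : Xsep).
Hypotheses (oU : open U) (cU : connected U) (Uz0 : U (pi_sep z0)).

Local Notation comp x := (connected_component (pi @^-1` U) x).
Definition in_comp_sep : pred Xsep :=
  fun z => `[< connected_component (pi_sep @^-1` U) z0 z >].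

(* each component of [pi @^-1` U] mapping into the component of [z0] meets the
   finite fibre over [pi_sep z0]; [comp_rep] picks the first such point *)
Definition comp_reps := [seq x <- fibre (pi_sep z0) | in_comp_sep (q x)].
Definition comp_rep x := nth x comp_reps (find (fun x0 => `[< comp x0 = comp x >]) comp_reps).

Lemma comp_reps_has y x : U y -> x \in fibre y -> in_comp_sep (q x) ->
  has (fun x0 => `[< comp x0 = comp x >]) comp_reps.
Proof.
move=> Uy; rewrite fibre_mem => /asboolP px /asboolP Vx.
have Ux : U (pi x) by rewrite px.
have [w [Cw pw]] := component_onto oU cU Ux Uz0.
apply/hasP; exists w; last by apply/asboolP/esym/same_connected_component.
rewrite mem_filter fibre_mem; apply/andP; split; apply/asboolP => //.
exact: q_component Vx Cw.
Qed.

Lemma comp_repP y x : U y -> x \in fibre y -> in_comp_sep (q x) ->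
  comp_rep x \in comp_reps /\ comp (comp_rep x) = comp x.
Proof.
move=> Uy xF Vx; have hx := comp_reps_has Uy xF Vx; split.
  by apply: mem_nth; rewrite -has_find.
by have /asboolP := nth_find x hx.
Qed.

Lemma comp_repE a b : comp a = comp b ->
  has (fun x0 => `[< comp x0 = comp a >]) comp_reps -> comp_rep a = comp_rep b.
Proof.
move=> Eab ha; rewrite /comp_rep.
have -> : (fun x1 => `[< comp x1 = comp a >]) = (fun x1 => `[< comp x1 = comp b >]).
  by apply: funext => x1; rewrite Eab.
by apply: set_nth_default; rewrite -has_find -Eab.
Qed.

Definition comp_weight x0 := \sum_(w <- fibre (pi_sep z0) | `[< comp x0 w >]) mu w.

Lemma comp_rep_sum y x0 : U y -> x0 \in comp_reps ->
  \sum_(x <- fibre y | in_comp_sep (q x) && (comp_rep x == x0)) mu x =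
  if comp_rep x0 == x0 then comp_weight x0 else 0%N.
Proof.
move=> Uy; rewrite mem_filter => /andP[Vx0 x0F].
have Ux0 : U (pi x0) by move: x0F; rewrite fibre_mem => /asboolP ->.
have [_ crx0] := comp_repP Uz0 x0F Vx0.
case: eqP => [Erx0|Nrx0]; last first.
  rewrite big_seq_cond big_pred0 // => x; apply/negP => /andP[xF /andP[Vx /eqP Ex]].
  have [_ crx] := comp_repP Uy xF Vx.
  apply: Nrx0; rewrite -{2}Ex -Ex; apply: comp_repE => //.
  by rewrite crx; exact: comp_reps_has xF Vx.
have [c Hc] := component_trace oU cU Ux0.
rewrite /comp_weight (Hc _ Uz0) -(Hc _ Uy) big_seq_cond [RHS]big_seq_cond.
apply: eq_bigl => x; case xF: (x \in fibre y) => //=.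
have Ux : U (pi x) by move: xF; rewrite fibre_mem => /asboolP ->.
apply/andP/asboolP.
  case=> Vx /eqP Ex; have [_ crx] := comp_repP Uy xF Vx.
  by rewrite -Ex; change (comp (comp_rep x) x); rewrite crx; exact: connected_component_refl.
move=> Cx; have Vx : in_comp_sep (q x) by apply/asboolP/(q_component (asboolP _ Vx0) Cx).
split => //; apply/eqP; rewrite -[in RHS]Erx0; apply: comp_repE.
  exact/esym/same_connected_component.
exact: comp_reps_has xF Vx.
Qed.

Lemma comp_sep_trace y : U y ->
  \sum_(x <- fibre y | in_comp_sep (q x)) mu x =
  \sum_(x0 <- comp_reps | comp_rep x0 == x0) comp_weight x0.
Proof.
move=> Uy; rewrite -big_filter -(@big_seq_partition _ _ comp_rep comp_reps); last first.
- by move=> x; rewrite mem_filter => /andP[Vx xF]; case: (comp_repP Uy xF Vx).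
- by rewrite filter_uniq ?fibre_uniq.
rewrite [RHS]big_mkcond big_seq [RHS]big_seq; apply: eq_bigr => x0 x0R.
by rewrite big_filter_cond (comp_rep_sum Uy x0R).
Qed.

End ComponentTrace.

Lemma pi_sep_component_trace (U : set 'rV[R]_n) : open U -> connected U ->
  forall V : set Xsep, (exists z0, U (pi_sep z0) /\
    V = connected_component (pi_sep @^-1` U) z0) ->
  exists c, forall y, U y -> trace_is V pi_sep mu_sep y c.
Proof.
move=> oU cU _ [z0 [Uz0 ->]].
exists (\sum_(x <- fibre (pi_sep z0) | in_comp_sep U z0 (q x)) mu x) => y Uy.
rewrite (comp_sep_trace oU cU Uz0 Uz0) -(comp_sep_trace oU cU Uz0 Uy).
have [s [us [Es sum_s]]] := q_fibre_trace y (in_comp_sep U z0).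
exists s; split => //; split => // z; rewrite -Es.
by split => -[Vz pz]; split => //; apply/asboolP.
Qed.

Lemma closed_cone_over (b : I) (t : fan_idx S) :
  closed (cone b `&` pi @^-1` fan_cone t).
Proof.
have [u [_ Eu]] := cone_fan_face b t.
have -> : cone b `&` pi @^-1` fan_cone t = cone b `&` (lin u \o pi) @^-1` [set 0].
  by apply/seteqP; split => x [xb xt]; split => //; apply/(Eu x xb).
apply: closedI; first exact: cone_closed.
apply: preimage_closed; last exact: closed_eq.
by move=> x _; apply: continuous_comp; [exact: tl_pi_continuous | exact: lin_continuous].
Qed.

Lemma closed_cone_over_skel1 (b : I) : closed (cone b `&` pi @^-1` skel1 S).
Proof.
have -> : cone b `&` pi @^-1` skel1 S = (cone b `&` pi @^-1` [set 0]) `|`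
    \bigcup_(t in [set t : fan_idx S | fan_dim t = 1%N]) (cone b `&` pi @^-1` fan_cone t).
  apply/seteqP; split => x.
    by case=> xb [px0|[t [dt xt]]]; [left | right; exists t].
  by case=> [[xb px0]|[t dt [xb xt]]]; split => //; [left | right; exists t].
apply: closedU.
  apply: closedI; first exact: cone_closed.
  apply: preimage_closed; first by move=> x _; exact: tl_pi_continuous.
  exact/accessible_closed_set1/hausdorff_accessible/norm_hausdorff.
by apply: closed_bigcup => [|t _]; [exact: finite_finset | exact: closed_cone_over].
Qed.

(* the graph of [phi] over [pi (cone i)] is closed, since [pi] restricted to [cone i]
   is a homeomorphism onto its image *)
Lemma closed_cone_phipi (i b : I) :
  closed (cone b `&` [set x | exists2 w, cone i w & phipi w = phipi x]).
Proof.
have [s [Es [_ [_ pi_open]]]] := pi_cone_onto i.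
move=> x clx.
have [xb xs] : (cone b `&` pi @^-1` fan_cone s) x.
  apply: closed_cone_over; apply: closureS clx => y [yb [w wi Ew]].
  by split => //=; rewrite -Es -(phipi_pi Ew); exists w.
move: xs; rewrite -Es => -[w wi Ew].
suff Ephi : phi w = phi x by split => //; exists w; rewrite // /phipi Ephi Ew.
apply: Rhausdorff => A B A_phiw B_phix.
have nA : nbhs w (phi @^-1` A) := tl_phi_continuous A_phiw.
have nB : nbhs x (phi @^-1` B) := tl_phi_continuous B_phix.
have near_w := pi_open w wi _ nA; rewrite Ew in near_w.
have nA' : nbhs x (pi @^-1` [set y | forall z, cone i z -> pi z = y -> (phi @^-1` A) z]).
  exact: tl_pi_continuous near_w.
have [x' [[x'b [w' w'i Ew']] [Bx' near_x']]] := clx _ (filterI nB nA').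
exists (phi x'); split => //.
by rewrite -(phipi_phi Ew'); exact: near_x' w' w'i (phipi_pi Ew').
Qed.

Lemma cone_sep_closed (i : I) : closed (cone_sep i).
Proof.
have preq : q @^-1` cone_sep i = \bigcup_(b in [set: I]) ((cone b `&` cone i) `|`
    ((cone b `&` pi @^-1` skel1 S) `&`
     (cone b `&` [set x | exists2 w, cone i w & phipi w = phipi x]))).
  apply/seteqP; split => x.
    case=> w wi /esym /glueP /asboolP gwx; have [b xb] := cone_cover x; exists b => //.
    case: gwx => [Exw|[Ew sk]]; first by subst w; left.
    by right; split; split => //; exists w.
  case=> b _ [[xb xi]|[[xb sk] [_ [w wi Ew]]]]; first by exists x.
  by exists w => //; apply/glueP/asboolP; right; rewrite (phipi_pi Ew).
suff qc : closed (q @^-1` cone_sep i).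
  have : open (q @^-1` ~` cone_sep i) by rewrite preimage_setC openC.
  by rewrite -openC; exact.
rewrite preq; apply: closed_bigcup => [|b _]; first exact: finite_finset.
apply: closedU; first by apply: closedI; exact: cone_closed.
by apply: closedI; [exact: closed_cone_over_skel1 | exact: closed_cone_phipi].
Qed.

(* every component of [L] surjects onto [N_R], so it meets the fibre over [0],
   which [q] collapses to a single point *)
Lemma Xsep_connected : connected [set: Xsep].
Proof.
have [x0 px0] := pi_surj 0.
pose A x := q @` connected_component (pi @^-1` [set: 'rV[R]_n]) x.
have -> : [set: Xsep] = \bigcup_(x in setT) A x.
  apply/seteqP; split => z // _; have [x <-] := q_surj z; exists x => //.
  by exists x => //; apply: connected_component_refl.
apply: bigcup_connected.
  exists (q x0) => x _.
  have [w [Cw pw]] := component_onto openT (@rV_connected n)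
    (Logic.I : setT (pi x)) (Logic.I : setT 0).
  exists w => //; apply/glueP/asboolP; right; split; last by left.
  by rewrite !phipi_over0.
move=> x _; apply: connected_continuous_connected; first exact: component_connected.
exact: continuous_subspaceT q_continuous.
Qed.

Lemma q_morphism : cc_morphism (tl_cc L) cc_sep q.
Proof.
split; first exact: q_continuous.
move=> i; have [j Ej] := Isep_rep i; exists j; split.
  by move=> x xi; rewrite /= Ej; exists x.
move=> g [z Ez]; have [W EW] := phipi_linear i.
exists (fun m => \sum_(k < 1 + n) z k * W m k) => x xi /=.
rewrite Ez; last by rewrite /= Ej; exists x.
rewrite (eq_bigr (fun k => \sum_(m < cc_dim i) (z k)%:~R * (ev i x 0 m * (W m k)%:~R))).
  rewrite exchange_big /=; apply: eq_bigr => m _.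
  rewrite rmorph_sum big_distrl /=; apply: eq_bigr => k _.
  by rewrite !mxE intrM mulrCA mulrC.
move=> k _; rewrite gen_sepE phipi_sep_q EW // mxE big_distrr.
by apply: eq_bigr => m _; rewrite !mxE.
Qed.

Lemma cone_sep_over_ray (t : fan_idx S) (a b : Isep) : fan_dim t = 1%N ->
  pi_sep @` cone_sep (val a) = fan_cone t -> pi_sep @` cone_sep (val b) = fan_cone t ->
  (forall za zb, cone_sep (val a) za -> cone_sep (val b) zb ->
     pi_sep za = pi_sep zb -> phi_sep za = phi_sep zb) ->
  cone_sep (val a) `<=` cone_sep (val b).
Proof.
move=> dt Ea Eb phi_ab _ [x xa <-].
have za : cone_sep (val a) (q x) by exists x.
have tx : fan_cone t (pi_sep (q x)) by rewrite -Ea; exists (q x).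
move: (tx); rewrite -Eb => -[_ [x' x'b <-] Ex'].
have zb : cone_sep (val b) (q x') by exists x'.
suff -> : q x = q x' by [].
apply/glueP/asboolP; right; split; last by right; exists t; rewrite -pi_sep_q.
by rewrite -!phipi_sep_q /phipi_sep (phi_ab _ _ za zb (esym Ex')) Ex'.
Qed.

Definition Lsep : tlms_data n := @TLMS n Xsep cc_sep mu_sep pi_sep phi_sep.

Lemma Lsep_cone_complex : is_cone_complex cc_sep.
Proof.
split.
- by move=> j; exact: cone_sep_closed.
- move=> j k; apply: continuous_subspaceT => z.
  apply: (@continuous_comp _ _ _ phipi_sep (fun v : 'rV[R]_(1 + n) => v 0 k)).
    exact: phipi_sep_continuous.
  exact: coord_continuous.
- move=> j; have -> : @cc_ev _ cc_sep j = phipi_sep by apply: funext => z; rewrite ev_sepE.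
  by split; [exact: phipi_sep_embedding | exact: phipi_sep_poscone].
- exact: cone_sep_face.
- exact: relint_sep_exists_unique.
Qed.

Lemma Lsep_tlms : is_tlms S r Lsep.
Proof.
split.
- exact: Lsep_cone_complex.
- split; [split; [exact: mu_sep_gt0 | exact: mu_sep_relint] | exact: pi_sep_morphism | | |].
  + by move=> y; have [x <-] := pi_surj y; exists (q x); rewrite /= pi_sep_q.
  + exact: pi_sep_cone_onto.
  + exact: pi_sep_component_trace.
- exact: pi_sep_trace.
- exact: phi_sep_continuous.
- exact: phi_sep_inM.
Qed.

Lemma Lsep_le : tlms_le Lsep L.
Proof.
exists q; split.
- exact: q_morphism.
- exact: q_surj.
- exact: pi_sep_q.
- exact: q_trace.
- exact: phi_sep_q.
Qed.

Lemma Lsep_separable : separable S Lsep.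
Proof.
split; first exact: Xsep_connected.
move=> t dt a b nab Ea Eb phi_ab; apply/nab/Isep_inj/seteqP; split.
  exact: cone_sep_over_ray dt Ea Eb phi_ab.
apply: (cone_sep_over_ray dt Eb Ea) => zb za zbb zaa /esym pz.
exact/esym/phi_ab.
Qed.

End Separation.

Lemma tlms_le_refl (n : nat) (L : tlms_data n) : tlms_le L L.
Proof.
exists id; split => //.
- by split => [x|i]; last exists i.
- by move=> y; exists y.
- move=> y; exists [:: y]; split => //; split; last by rewrite /= addn0.
  by move=> x; rewrite inE; split => [[_ ->] | /eqP ->].
Qed.

Theorem proposition3p14 (n : nat) (S : fan n) (r : nat) (L : tlms_data n) :
  is_fan S -> complete_fan S -> is_tlms S r L ->
  (exists Lsep : tlms_data n,
     [/\ is_tlms S r Lsep, separable S Lsep & tlms_le Lsep L]) /\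
  (tl_connected L ->
     exists Lsep : tlms_data n,
       [/\ is_tlms S r Lsep, separable S Lsep & comb_equiv S L Lsep]).
Proof.
move=> HS HSc HL.
have [tlms sep le] := And3 (Lsep_tlms HS HSc HL) (Lsep_separable HL) (Lsep_le HL).
split; first by exists (Lsep HL).
move=> Lconn; exists (Lsep HL); split => //; apply: rst_step.
split=> //; split; first by case: sep.
split; first by exists r.
by exists (Lsep HL); split; [exists r | split => //; exact: tlms_le_refl].
Qed.
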